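(* Let $S \subset \mathbb{Z}$ be a finite set, $n \ge 0$, $P \in \mathcal{P}_{2n}(S)$, $u \ge 0$ an integer, and let $R$ be a polynomial of degree at most $u$ with complex coefficients, $R \not\equiv 0$. Suppose $\mathrm{NC}(PR) \le \nu$. Let $v := \lfloor 16u\log\log(u+3)\rfloor$, $k := d_v$, and $H(z) := z^k - 1$. Then $$\mathrm{NC}(PH) \le (\nu+1)\big(k + |S|^{u+1} + 3(u+1) + 2\big),$$ where $|S|$ is the number of elements of $S$.
   Context: For $S \subset \mathbb{C}$ and $N\ge0$, $\mathcal{P}_N(S)$ denotes the set of polynomials $P(z)=\sum_{j=0}^N a_j z^j$ with every $a_j \in S$. For a polynomial $F(z)=\sum_j c_j z^j$, $\mathrm{NC}(F)$ is the number of indices $j$ with $c_j\ne0$. $d_v := \mathrm{LCM}(1,2,\dots,v)$ for $v\ge1$, and $d_0 := 1$. *)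

From Stdlib Require Import Reals ZArith.
From HB Require Import structures.
From mathcomp Require Import all_boot all_order all_algebra.
Set Implicit Arguments. Unset Strict Implicit. Unset Printing Implicit Defensive.
Import Order.TTheory GRing.Theory Num.Theory.
Local Open Scope ring_scope.

Definition NC (C : nzRingType) (F : {poly C}) : nat :=
  count (fun c : C => c != 0) (polyseq F).

Definition poly_of_coefs (C : nzRingType) (N : nat) (a : nat -> int) : {poly C} :=
  \poly_(j < N.+1) ((a j)%:~R : C).

Definition coefs_in (S : seq int) (N : nat) (a : nat -> int) : Prop :=
  forall j : nat, (j <= N)%N -> a j \in S.

Definition vpar (u : nat) : nat :=
  Z.to_nat (Int_part (Rmult (Rmult (IZR (Zpos 16%positive)) (INR u)) (ln (ln (Rplus (INR u) (IZR (Zpos 3%positive))))))).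

Definition dlcm (v : nat) : nat := \big[lcmn/1%N]_(1 <= i < v.+1) i.

(* Write P for the polynomial with coefficients x_0, ..., x_N in S, and G for R
   stripped of its factor X^t, so that d := deg G <= u and G(0) != 0.  Off the
   indices of the nonzero coefficients of P * R, the sequence x satisfies the
   linear recurrence with characteristic coefficients G.  On a run of length
   |S|^d + k + d two windows of length d coincide by pigeonhole, so the
   recurrence makes x periodic there.  Extend this to a periodic sequence and
   pass to rational recurrence coefficients: if its discrete Fourier transform
   does not vanish at a root of unity z, then z^-1 is a root of a nonzero
   rational polynomial of degree <= d, so the order m of z has totient m <= d
   and hence divides k = d_v, as v >= 2u.  Thus x_(l - k) = x_l, i.e. the
   coefficient of z^l in P (z^k - 1) vanishes, unless l lies within
   |S|^d + k + d of 0 or of a nonzero coefficient of P * R. *)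

From Stdlib Require Import Reals ZArith Lra Lia.

Section VparBound.
Local Open Scope R_scope.

Lemma exp_le_inv_1_sub (y : R) : 0 < y < 1 -> exp y <= 1 / (1 - y).
Proof.
intros [y0 y1].
assert (Hprod : exp y * exp (- y) = 1) by (rewrite <- exp_plus, Rplus_opp_r; apply exp_0).
pose proof (exp_ineq1_le (- y)); pose proof (exp_pos y).
apply Rmult_le_reg_r with (1 - y); [lra|].
unfold Rdiv; rewrite Rmult_1_l, Rinv_l by lra.
nra.
Qed.

Lemma ln_le (a b : R) : 0 < a -> a <= b -> ln a <= ln b.
Proof.
intros a0 [ab|ab]; [left; apply ln_increasing; assumption | subst; apply Rle_refl].
Qed.

Lemma ln_ln_ge (x : R) : 4 <= x -> 1 / 8 <= ln (ln x).
Proof.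
(* exp (1/8) <= 8/7 and exp (8/7) <= 4 <= x. *)
intros Hx.
assert (E7 : exp (1 / 7) <= 7 / 6) by (eapply Rle_trans; [apply exp_le_inv_1_sub|]; lra).
assert (E8 : exp (8 / 7) <= 4).
{ replace (8 / 7) with (1 + 1 / 7) by lra; rewrite exp_plus.
  pose proof exp_le_3; pose proof (exp_pos 1); pose proof (exp_pos (1 / 7)); nra. }
assert (E1 : exp (1 / 8) <= 8 / 7) by (eapply Rle_trans; [apply exp_le_inv_1_sub|]; lra).
assert (Hln : 8 / 7 <= ln x).
{ rewrite <- (ln_exp (8 / 7)); apply ln_le; [apply exp_pos | lra]. }
rewrite <- (ln_exp (1 / 8)); apply ln_le; [apply exp_pos | lra].
Qed.

Lemma vpar_ge (u : nat) : (1 <= u)%nat -> (2 * u <= vpar u)%nat.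
Proof.
intros Hu; unfold vpar.
set (X := IZR 16 * INR u * ln (ln (INR u + IZR 3))).
assert (HX : INR (2 * u) <= X).
{ unfold X; rewrite mult_INR.
  assert (H1 : 1 <= INR u) by (apply (le_INR 1); lia).
  pose proof (ln_ln_ge (INR u + IZR 3) ltac:(simpl; lra)).
  simpl; nra. }
destruct (base_Int_part X) as [B1 B2].
assert (Hlt : IZR (Z.of_nat (2 * u)) < IZR (Int_part X + 1))
  by (rewrite plus_IZR, <- INR_IZR_INZ; lra).
apply lt_IZR in Hlt; lia.
Qed.

End VparBound.

From HB Require Import structures.
From mathcomp Require Import all_boot all_order all_algebra all_field.
From mathcomp Require Import zify.
Import Order.TTheory GRing.Theory Num.Theory.
Set Implicit Arguments. Unset Strict Implicit. Unset Printing Implicit Defensive.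
Local Open Scope ring_scope.

Definition totient_dvd (d k : nat) : Prop :=
  forall m, (0 < m)%N -> (totient m <= d)%N -> (m %| k)%N.

Lemma totient_dvdW (d d' k : nat) : (d <= d')%N -> totient_dvd d' k -> totient_dvd d k.
Proof. by move=> dd' hk m m0 tm; apply: hk; rewrite ?(leq_trans tm). Qed.

Lemma dvdn_dlcm v i : (0 < i)%N -> (i <= v)%N -> (i %| dlcm v)%N.
Proof.
move=> i0; elim: v => [|v IHv]; first by rewrite leqn0 => /eqP i_eq0; rewrite i_eq0 in i0.
rewrite /dlcm big_nat_recr //= -/(dlcm v) leq_eqVlt => /predU1P[->|/IHv]; first exact: dvdn_lcmr.
by move/dvdn_trans; apply; apply: dvdn_lcml.
Qed.

Lemma dvdn_dlcm_totient w : totient_dvd w./2 (dlcm w).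
Proof.
(* Split m = m' p^a with p prime: p^a <= 2 totient (p^a) <= w, and totient is
   multiplicative, so induction on m' applies. *)
move=> m; elim/ltn_ind: m => m IHm m0 tm.
have [m_le1|m_gt1] := leqP m 1; first by have -> : m = 1%N by lia.
have p_pr : prime (pdiv m) by rewrite pdiv_prime.
set p := pdiv m in p_pr *.
have [m' cop_m' def_m] := pfactor_coprime p_pr m0.
set a := logn p m in def_m.
have a_gt0 : (0 < a)%N by rewrite logn_gt0 mem_primes p_pr m0 pdiv_dvd.
have m'_gt0 : (0 < m')%N by move: m0; rewrite def_m muln_gt0 => /andP[].
have pa_gt0 : (0 < p ^ a)%N by rewrite expn_gt0 prime_gt0.
have tot_m : totient m = (totient m' * totient (p ^ a))%N.
  by rewrite def_m totient_coprime // coprime_sym coprimeXl.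
have tm'_gt0 : (0 < totient m')%N by rewrite totient_gt0.
have tpa_gt0 : (0 < totient (p ^ a))%N by rewrite totient_gt0.
rewrite def_m Gauss_dvd ?coprimeXr 1?coprime_sym //; apply/andP; split.
  apply: IHm => //; last by apply: leq_trans tm; rewrite tot_m leq_pmulr.
  by rewrite def_m -{1}(muln1 m') ltn_pmul2l // -(expn0 p) ltn_exp2l ?prime_gt1.
apply: dvdn_dlcm => //; apply: leq_trans (_ : (2 * totient (p ^ a) <= w)%N).
  rewrite totient_pfactor // -(prednK a_gt0) expnS mulnA leq_pmul2r ?expn_gt0 ?prime_gt0 //.
  by have := prime_gt1 p_pr; lia.
by move: tm; rewrite tot_m; have := leq_pmull (totient (p ^ a)) tm'_gt0; lia.
Qed.

Definition periodic (A : Type) (f : nat -> A) (T : nat) : Prop :=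
  forall q, f (q + T)%N = f q.

Lemma periodic_modn (A : Type) (f : nat -> A) (T : nat) :
  periodic f T -> forall q, f q = f (q %% T)%N.
Proof.
move=> fT q; rewrite {1}(divn_eq q T).
by elim: (q %/ T)%N => [|n IHn]; rewrite ?add0n // mulSn -addnA addnC fT.
Qed.

Lemma periodic_shift (A : Type) (y : nat -> A) T q s :
  periodic y T -> y (q + s)%N = y (q %% T + s)%N.
Proof. by move=> yT; rewrite (periodic_modn yT) [RHS](periodic_modn yT) modnDml. Qed.

Definition dft (R : nzRingType) (T : nat) (y : nat -> int) (z : R) : R :=
  \sum_(j < T) (y j)%:~R * z ^+ j.

Lemma dftB (R : nzRingType) T (y1 y2 : nat -> int) (z : R) :
  dft T (fun j => y1 j - y2 j)%R z = dft T y1 z - dft T y2 z.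
Proof. by rewrite /dft -sumrB; apply: eq_bigr => j _; rewrite intrB mulrBl. Qed.

Lemma dft_shift (R : comNzRingType) T (y : nat -> int) (z : R) s :
  z ^+ T = 1 -> periodic y T -> z ^+ s * dft T (fun j => y (j + s)%N) z = dft T y z.
Proof.
move=> zT yT; elim: s => [|s IHs].
  by rewrite expr0 mul1r; apply: eq_bigr => j _; rewrite addn0.
rewrite -IHs exprSr -mulrA; congr (_ * _); rewrite /dft mulr_sumr.
pose g j := (y (j + s)%N)%:~R * z ^+ j.
have gT : g T = g 0%N by rewrite /g zT expr0 add0n addnC yT.
have recr : \sum_(j < T.+1) g j = \sum_(j < T) g j + g T by rewrite big_ord_recr.
have recl : \sum_(j < T.+1) g j = g 0%N + \sum_(j < T) g j.+1 by rewrite big_ord_recl.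
have -> : \sum_(j < T) g j = \sum_(j < T) g j.+1.
  by apply: (addrI (g 0%N)); rewrite -recl recr gT addrC.
by apply: eq_bigr => j _; rewrite /g addSnnS exprS mulrCA.
Qed.

Lemma unity_root_neq0 (F : idomainType) (z : F) T : (0 < T)%N -> z ^+ T = 1 -> z != 0.
Proof.
move=> T0 zT; apply/eqP => z0; move: zT.
by rewrite z0 expr0n gtn_eqF // => /eqP; rewrite eq_sym oner_eq0.
Qed.

Lemma dft_shiftV (F : fieldType) T (y : nat -> int) (z : F) s :
  (0 < T)%N -> z ^+ T = 1 -> periodic y T ->
  dft T (fun j => y (j + s)%N) z = z^-1 ^+ s * dft T y z.
Proof.
move=> T0 zT yT; rewrite -(dft_shift s zT yT) mulrA -exprMn mulVf ?expr1n ?mul1r //.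
exact: unity_root_neq0 zT.
Qed.

Lemma sum_unity_root_eq0 (F : idomainType) (z : F) (T : nat) :
  z ^+ T = 1 -> z != 1 -> \sum_(i < T) z ^+ i = 0.
Proof.
move=> zT z_neq1; apply/eqP; move: (subrX1 z T); rewrite zT subrr => /esym/eqP.
by rewrite mulf_eq0 subr_eq0 (negbTE z_neq1).
Qed.

Lemma dft_inversion T (w : nat -> int) (om : algC) l :
  T.-primitive_root om -> (l < T)%N ->
  \sum_(i < T) (om ^+ i) ^+ (T - l) * dft T w (om ^+ i) = (w l)%:~R * T%:R.
Proof.
move=> om_pr lT; have omT := prim_expr_order om_pr.
have -> : \sum_(i < T) (om ^+ i) ^+ (T - l) * dft T w (om ^+ i)
    = \sum_(j < T) (w j)%:~R * \sum_(i < T) (om ^+ (T - l + j)) ^+ i.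
  under eq_bigr => i _ do rewrite /dft mulr_sumr.
  rewrite exchange_big /=; apply: eq_bigr => j _; rewrite mulr_sumr.
  apply: eq_bigr => i _; rewrite mulrCA -!exprM -exprD.
  by rewrite -mulnDr mulnC.
rewrite (bigD1 (Ordinal lT)) //= [X in _ + X]big1 ?addr0 => [|j /eqP j_neq_l].
  rewrite subnK 1?ltnW // omT (eq_bigr (fun _ => 1)) => [|i _]; last exact: expr1n.
  by rewrite sumr_const card_ord.
rewrite sum_unity_root_eq0 ?mulr0 //; first by rewrite exprAC omT expr1n.
rewrite -(prim_order_dvd om_pr); apply/negP => /dvdnP[c Tc]; apply: j_neq_l.
by apply: val_inj => /=; have := ltn_ord j; case: c Tc => [|[|c]]; rewrite ?mulSn; lia.
Qed.

Lemma periodic_eq0_of_dft T (w : nat -> int) :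
  (0 < T)%N -> periodic w T -> (forall z : algC, z ^+ T = 1 -> dft T w z = 0) ->
  forall q, w q = 0%R.
Proof.
move=> T0 wT dft0 q; have [om om_pr] := C_prim_root_exists T0.
have := dft_inversion w om_pr (ltn_pmod q T0).
rewrite big1 => [/esym/eqP|i _]; last first.
  by rewrite dft0 ?mulr0 // exprAC (prim_expr_order om_pr) expr1n.
by rewrite mulf_eq0 pnatr_eq0 intr_eq0 gtn_eqF // orbF -(periodic_modn wT) => /eqP.
Qed.

Lemma unity_root_expr_eq1 (A : {poly rat}) (T k : nat) (x : algC) :
  (0 < T)%N -> x ^+ T = 1 -> A != 0 -> root (map_poly ratr A) x ->
  totient_dvd (size A).-1 k -> x ^+ k = 1.
Proof.
move=> T0 xT A0 rootAx hk; have [m m_pr _] := prim_order_exists T0 xT.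
have [p [min_p _] dvd_p] := minCpolyP x.
have size_p : size p = (totient m).+1.
  rewrite -(size_map_poly (ratr : {rmorphism rat -> algC}) p) -min_p.
  by rewrite (minCpoly_cyclotomic m_pr) size_cyclotomic.
have : (size p <= size A)%N by apply: dvdp_leq; rewrite // -dvd_p.
rewrite size_p => size_A; have tm : (totient m <= (size A).-1)%N by lia.
by apply/eqP; rewrite -(prim_order_dvd m_pr) hk ?(prim_order_gt0 m_pr).
Qed.

Definition recurrence_sum (R : nzRingType) (rho : nat -> R) (d : nat)
    (x : nat -> int) (q : nat) : R :=
  \sum_(s < d.+1) rho s * (x (q + s)%N)%:~R.

Lemma dft_recurrence (al : nat -> rat) d T (y : nat -> int) (z : algC) :
  (0 < T)%N -> z ^+ T = 1 -> periodic y T -> (forall q, recurrence_sum al d y q = 0) ->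
  (map_poly ratr (\poly_(s < d.+1) al s)).[z^-1] * dft T y z = 0.
Proof.
move=> T0 zT yT rec0.
rewrite (horner_coef_wide _ (n := d.+1)) ?size_map_poly ?size_poly // mulr_suml.
under eq_bigr => s _ do rewrite coef_map coef_poly ltn_ord -mulrA -(dft_shiftV _ T0 zT yT).
under eq_bigr => s _ do rewrite /dft mulr_sumr.
rewrite exchange_big big1 //= => j _.
rewrite [RHS](_ : _ = ratr (recurrence_sum al d y j) * z ^+ j); last first.
  by rewrite rec0 rmorph0 mul0r.
rewrite rmorph_sum mulr_suml; apply: eq_bigr => s _.
by rewrite rmorphM /= ratr_int mulrA.
Qed.

Lemma rat_recurrence_periodic (al : nat -> rat) d T k (y : nat -> int) :
  (0 < T)%N -> periodic y T -> (exists2 s, (s <= d)%N & al s != 0) ->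
  (forall q, recurrence_sum al d y q = 0) -> totient_dvd d k -> periodic y k.
Proof.
move=> T0 yT [s0 s0d al_s0] rec0 hk.
pose A := \poly_(s < d.+1) al s.
have A0 : A != 0.
  by apply: contra_neq al_s0 => A0; move: (coef_poly d.+1 al s0); rewrite -/A A0 coef0 ltnS s0d.
pose w j := (y (j + k)%N - y j)%R.
have wT : periodic w T by move=> q; rewrite /w addnAC !yT.
move=> q; apply/eqP; rewrite -subr_eq0; apply/eqP.
apply: (periodic_eq0_of_dft T0 wT) => z zT {q}.
rewrite dftB dft_shiftV // -{2}[dft T y z]mul1r -mulrBl.
have [->|Y0] := eqVneq (dft T y z) 0; first by rewrite mulr0.
suff -> : z^-1 ^+ k = 1 by rewrite subrr mul0r.
have xT : z^-1 ^+ T = 1 by rewrite exprVn zT invr1.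
apply: (unity_root_expr_eq1 T0 xT A0).
  by move/eqP: (dft_recurrence T0 zT yT rec0); rewrite mulf_eq0 (negbTE Y0) orbF.
by apply: (totient_dvdW _ hk); rewrite -subn1 leq_subLR add1n size_poly.
Qed.

Lemma left_kernel_map_mx (F K : fieldType) (f : {rmorphism F -> K}) m n
    (M : 'M[F]_(m, n)) (v : 'rV[K]_m) :
  v != 0 -> v *m map_mx f M = 0 -> exists2 u : 'rV[F]_m, u != 0 & u *m M = 0.
Proof.
move=> v0 vM; have /rowV0Pn[u /sub_kermxP uM u0] : kermx M != 0.
  rewrite kermx_eq0; apply: contra v0 => freeM.
  by rewrite -(mulmx_free_eq0 _ (_ : row_free (map_mx f M))) ?vM // /row_free mxrank_map.
by exists u.
Qed.

Lemma rat_recurrence_of_periodic (C : numClosedFieldType) (rho : nat -> C) d T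
    (y : nat -> int) :
  (0 < T)%N -> periodic y T -> (exists2 s, (s <= d)%N & rho s != 0) ->
  (forall q, recurrence_sum rho d y q = 0) ->
  exists2 al : nat -> rat, (exists2 s, (s <= d)%N & al s != 0) &
    forall q, recurrence_sum al d y q = 0.
Proof.
move=> T0 yT [s0 s0d rho_s0] rec0.
pose M : 'M[rat]_(d.+1, T) := \matrix_(s, j) (y (j + s)%N)%:~R.
have [u u0 uM] : exists2 u : 'rV_d.+1, u != 0 & u *m M = 0.
  apply: (@left_kernel_map_mx _ _ ratr _ _ M (\row_s rho s)).
- by apply/rV0Pn; exists (Ordinal (s0d : s0 < d.+1)%N); rewrite mxE.
- apply/rowP => j; rewrite !mxE -[RHS](rec0 j); apply: eq_bigr => s _.
  by rewrite !mxE rmorph_int.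
pose al s := if (s < d.+1)%N then u 0 (inord s) else 0.
have alE (s : 'I_d.+1) : al s = u 0 s by rewrite /al ltn_ord inord_val.
exists al.
  by have /rV0Pn[s us] := u0; exists (val s); [rewrite -ltnS ltn_ord | rewrite alE].
move=> q; have := congr1 (fun w : 'rV_T => w 0 (Ordinal (ltn_pmod q T0))) uM.
rewrite !mxE => <-; apply: eq_bigr => s _.
by rewrite alE mxE (periodic_shift _ _ yT).
Qed.

Lemma periodic_recurrence_period (C : numClosedFieldType) (rho : nat -> C) d T k
    (y : nat -> int) :
  (0 < T)%N -> periodic y T -> (exists2 s, (s <= d)%N & rho s != 0) ->
  (forall q, recurrence_sum rho d y q = 0) -> totient_dvd d k -> periodic y k.
Proof.
move=> T0 yT rho0 rec0; have [al al0 rec_al] := rat_recurrence_of_periodic T0 yT rho0 rec0.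
exact: rat_recurrence_periodic T0 yT al0 rec_al.
Qed.

Fixpoint all_words (T : Type) (S : seq T) (n : nat) : seq (seq T) :=
  if n is n'.+1 then [seq z :: w | z <- S, w <- all_words S n'] else [:: [::]].

Lemma size_all_words (T : Type) (S : seq T) n : size (all_words S n) = (size S ^ n)%N.
Proof. by elim: n => [|n IHn] //=; rewrite size_allpairs IHn expnS. Qed.

Lemma mem_all_words (T : eqType) (S : seq T) n w :
  size w = n -> all (mem S) w -> w \in all_words S n.
Proof.
elim: n w => [|n IHn] [|z w] //= [size_w] /andP[zS wS].
by apply: allpairs_f => //; apply: IHn.
Qed.

Section LinearRecurrence.

Variables (C : numClosedFieldType) (rho : nat -> C) (d : nat) (x : nat -> int).
Hypothesis rho_d : rho d != 0.

Let rec_on (a l : nat) :=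
  forall q, (a <= q)%N -> (q + d <= l)%N -> recurrence_sum rho d x q = 0.

Lemma window_collision (S : seq int) a :
  (forall j, (a <= j < a + size S ^ d + d)%N -> x j \in S) ->
  exists i j, [/\ (a <= i < j)%N, (j <= a + size S ^ d)%N
    & forall s, (s < d)%N -> x (i + s)%N = x (j + s)%N].
Proof.
move=> xS; set L := (size S ^ d)%N in xS *.
pose window q := mkseq (fun s => x (q + s)%N) d.
have sub_words : {subset [seq window q | q <- iota a L.+1] <= all_words S d}.
  move=> w /mapP[q]; rewrite mem_iota => /andP[aq qa] ->.
  apply: mem_all_words; first by rewrite size_mkseq.
  by apply/allP => z /mapP[s]; rewrite mem_iota => /andP[_ sd] ->; apply: xS; lia.
have : ~~ uniq [seq window q | q <- iota a L.+1].
  apply/negP => /uniq_leq_size/(_ sub_words).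
  by rewrite size_map size_iota size_all_words ltnn.
case/(uniqPn [::]) => i' [j' [ij jL]]; rewrite size_map size_iota in jL.
rewrite !(nth_map 0%N) ?size_iota ?nth_iota; [|lia..] => eq_w.
exists (a + i')%N, (a + j')%N; split; [lia | lia | move=> s sd].
by have := congr1 (nth 0%Z ^~ s) eq_w; rewrite !nth_mkseq.
Qed.

Lemma recurrence_step w1 w2 :
  recurrence_sum rho d x w1 = 0 -> recurrence_sum rho d x w2 = 0 ->
  (forall s, (s < d)%N -> x (w1 + s)%N = x (w2 + s)%N) -> x (w1 + d)%N = x (w2 + d)%N.
Proof.
rewrite /recurrence_sum !big_ord_recr /= => rec1 rec2 eq_w.
have eq_sum : \sum_(s < d) rho s * (x (w1 + s)%N)%:~R = \sum_(s < d) rho s * (x (w2 + s)%N)%:~R.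
  by apply: eq_bigr => s _; rewrite eq_w.
apply/intr_inj/(mulfI rho_d)/(addrI (\sum_(s < d) rho s * (x (w2 + s)%N)%:~R)).
by rewrite rec2 -eq_sum rec1.
Qed.

Lemma window_period_propagates i T l : rec_on i l ->
  (forall s, (s < d)%N -> x (i + s)%N = x (i + T + s)%N) ->
  forall q, (i <= q)%N -> (q + T <= l)%N -> x (q + T)%N = x q.
Proof.
move=> rec0 eq_w; elim/ltn_ind=> q IHq iq qTl.
have [qd|dq] := ltnP q (i + d).
  by rewrite (_ : q + T = i + T + (q - i))%N -?eq_w; [congr x; lia | lia | lia].
have -> : q = (q - d + d)%N by rewrite subnK //; lia.
rewrite addnAC; symmetry; apply: recurrence_step; [apply: rec0; lia.. |].
by move=> s sd; rewrite addnAC; symmetry; apply: IHq; lia.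
Qed.

Lemma local_period_extends i T l k :
  (0 < T)%N -> (i + T + d <= l.+1)%N -> rec_on i l ->
  (forall q, (i <= q)%N -> (q + T <= l)%N -> x (q + T)%N = x q) -> totient_dvd d k ->
  forall q, (i <= q)%N -> (q + k <= l)%N -> x (q + k)%N = x q.
Proof.
move=> T0 iTl rec0 perT hk.
pose y w := x (i + w %% T)%N.
have yT : periodic y T by move=> w; rewrite /y modnDr.
have x_y w : (i + w <= l)%N -> x (i + w)%N = y w.
  elim/ltn_ind: w => w IHw iwl; have [wT|Tw] := ltnP w T; first by rewrite /y modn_small.
  rewrite -(subnK Tw) addnA perT ?IHw; [|lia..].
  by rewrite /y -(modnDr (w - T)) subnK.
have rec_y w : recurrence_sum rho d y w = 0.
  have wT := ltn_pmod w T0; rewrite -[RHS](rec0 (i + w %% T)%N); [|lia|lia].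
  apply: eq_bigr => s _; rewrite -addnA x_y; last by have := ltn_ord s; lia.
  by rewrite (periodic_shift _ _ yT).
have yk := periodic_recurrence_period T0 yT (ex_intro2 _ _ d (leqnn d) rho_d) rec_y hk.
move=> q iq qkl; rewrite -(subnKC iq) -addnA !x_y; [exact: yk | lia..].
Qed.

Lemma recurrence_window_period (S : seq int) a l k :
  (forall j, (a <= j <= l)%N -> x j \in S) -> rec_on a l ->
  (a + size S ^ d + k + d <= l)%N -> totient_dvd d k -> x (l - k)%N = x l.
Proof.
move=> xS rec0 long hk.
have [j /andP[aj jl]|i [j [/andP[ai ij] jL eq_w]]] := @window_collision S a.
  by apply: xS; lia.
have rec_i : rec_on i l by move=> q iq; apply: rec0; lia.
have perT : forall q, (i <= q)%N -> (q + (j - i) <= l)%N -> x (q + (j - i))%N = x q.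
  by apply: window_period_propagates rec_i _ => s sd; rewrite subnKC ?eq_w // ltnW.
rewrite -{2}(subnK (_ : k <= l)%N); last by lia.
by symmetry; apply: (local_period_extends _ _ rec_i perT hk); lia.
Qed.

End LinearRecurrence.

Lemma count_le_window (p : pred nat) (s : seq nat) lo M :
  uniq s -> (forall l, p l -> (lo <= l <= lo + M)%N) -> (count p s <= M.+1)%N.
Proof.
move=> s_uniq p_lo; rewrite -size_filter -[M.+1](size_iota lo).
apply: uniq_leq_size => [|l]; first exact: filter_uniq.
by rewrite mem_filter mem_iota => /andP[/p_lo]; lia.
Qed.

Lemma count_le_windows (B s : seq nat) M : uniq s ->
  (count (fun l => has (fun b => b <= l <= b + M)%N B) s <= size B * M.+1)%N.
Proof.
move=> s_uniq; elim: B => [|b B IHB] /=; first by rewrite count_pred0.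
have window_b := @count_le_window (fun l => b <= l <= b + M)%N s b M s_uniq (fun l => id).
rewrite mulSn; apply: leq_trans _ (leq_add window_b IHB).
by rewrite -count_predUI leq_addr.
Qed.

Section NonzeroCoefficients.

Variable R : nzRingType.
Implicit Types (F : {poly R}) (s : seq nat).

Lemma NC_iota F : NC F = count (fun i => F`_i != 0) (iota 0 (size F)).
Proof. by rewrite /NC -{1}(mkseq_nth 0 F) /mkseq count_map. Qed.

Lemma count_coef_neq0_le F s : uniq s -> (count (fun i => F`_i != 0)%R s <= NC F)%N.
Proof.
move=> s_uniq; rewrite NC_iota -!size_filter uniq_leq_size ?filter_uniq // => i.
rewrite !mem_filter mem_iota /= => /andP[Fi _]; rewrite Fi /=.
by apply: contraR Fi; rewrite -leqNgt => /(nth_default 0) ->.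
Qed.

Lemma NC_le_count F m : (size F <= m)%N -> (NC F <= count (fun i => F`_i != 0)%R (iota 0 m))%N.
Proof. by move=> sFm; rewrite NC_iota -(subnKC sFm) iotaD count_cat leq_addr. Qed.

Lemma NC_mulXn F n : NC (F * 'X^n) = NC F.
Proof.
have [->|F0] := eqVneq F 0; first by rewrite mul0r.
by rewrite /NC polyseqMXn //; elim: n => //= n ->; rewrite eqxx.
Qed.

End NonzeroCoefficients.

Lemma poly_factor_Xn (R : nzRingType) (F : {poly R}) : F != 0 ->
  exists t (G : {poly R}), [/\ F = G * 'X^t, G`_0 != 0 & (size G <= size F)%N].
Proof.
move=> F0; have F_ex : exists i, F`_i != 0 by exists (size F).-1; rewrite -lead_coefE lead_coef_eq0.
case: (ex_minnP F_ex) => t Ft t_min; exists t, (drop_poly t F); split.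
- rewrite -[LHS](poly_take_drop t) [take_poly _ _](_ : _ = 0) ?add0r //.
  apply/polyP => i; rewrite coef_take_poly coef0; case: ltnP => // it.
  by apply/eqP; apply: contraTT it => /t_min; rewrite -leqNgt.
- by rewrite coef_drop_poly.
- by rewrite size_drop_poly leq_subr.
Qed.

Lemma coef_mul_recurrence (R : comNzRingType) (P G : {poly R}) (x : nat -> int) d q :
  (forall j, P`_j = (x j)%:~R) -> size G = d.+1 ->
  (P * G)`_(q + d) = recurrence_sum (fun s => G`_(d - s)) d x q.
Proof.
move=> Px size_G; rewrite coefMr.
have -> : \sum_(j < (q + d).+1) P`_(q + d - j) * G`_j = \sum_(j < d.+1) P`_(q + d - j) * G`_j.
  rewrite [RHS](big_ord_widen _ (fun j => P`_(q + d - j) * G`_j) (_ : d < (q + d).+1)%N).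
    rewrite [RHS]big_mkcond; apply: eq_bigr => j _; case: ltnP => // dj.
    by rewrite [G`_j]nth_default ?mulr0 ?size_G.
  by rewrite ltnS leq_addl.
rewrite (reindex_inj rev_ord_inj); apply: eq_bigr => s _ /=.
by rewrite Px mulrC subSS; congr (_ * (x _)%:~R); have := ltn_ord s; lia.
Qed.

Section CoefficientCount.

Variables (C : numClosedFieldType) (S : seq int) (P G : {poly C}) (x : nat -> int) (d k : nat).
Hypotheses (Px : forall j, P`_j = (x j)%:~R) (xS : forall j, (j < size P)%N -> x j \in S).
Hypotheses (size_G : size G = d.+1) (G0 : G`_0 != 0) (hk : totient_dvd d k).

Let M := (size S ^ d + k + d)%N.
(* Off B the coefficients of P satisfy the recurrence given by G, see
   coef_mul_recurrence. *)
Let B := [seq q <- iota 0 (size P) | (P * G)`_(q + d) != 0].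

Lemma int_coef_eq0 j : (size P <= j)%N -> x j = 0%R.
Proof. by move=> Pj; apply/eqP; rewrite -(intr_eq0 C) -Px nth_default. Qed.

Lemma coef_mul_Xnsub1 l :
  (P * ('X^k - 1))`_l = ((if (k <= l)%N then x (l - k)%N else 0) - x l)%:~R.
Proof. by rewrite mulrBr mulr1 coefB coefMXn intrB !Px; case: leqP. Qed.

Lemma mem_B_top : P != 0 -> (size P).-1 \in B.
Proof.
move=> P0; have sP : (0 < size P)%N by rewrite size_poly_gt0.
have G_neq0 : G != 0 by rewrite -size_poly_eq0 size_G.
rewrite mem_filter mem_iota /= prednK // leqnn andbT.
have -> : ((size P).-1 + d)%N = (size (P * G)).-1.
  by rewrite size_mul // size_G addnS /= -[in RHS](prednK sP).
by rewrite -lead_coefE lead_coef_eq0 mulf_neq0.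
Qed.

Lemma coef_mul_Xnsub1_cover l : (P * ('X^k - 1))`_l != 0 ->
  (l <= M)%N || has (fun b => b <= l <= b + M)%N B.
Proof.
move=> coef_l; apply/negPn/negP; rewrite negb_or -ltnNge => /andP[Ml /hasPn farB].
have P0 : P != 0 by apply: contra_neq coef_l => ->; rewrite mul0r coef0.
move: coef_l; rewrite coef_mul_Xnsub1 intr_eq0 subr_eq0 => /eqP[].
have [Pl|lP] := leqP (size P) l.
  have top := mem_B_top P0; have := farB _ top; rewrite negb_and -!ltnNge => /orP.
  by case; [lia | move=> lk; rewrite !int_coef_eq0; [case: ifP | lia ..]].
rewrite (_ : k <= l)%N; last by lia.
(* No index of B lies within M below l, so the recurrence holds on [l - M, l]. *)
apply: (@recurrence_window_period _ (fun s => G`_(d - s)) d x _ S (l - M)).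
- by rewrite subnn.
- by move=> j /andP[_ jl]; apply: xS; lia.
- move=> q lq qdl; rewrite -(coef_mul_recurrence q Px size_G); apply/eqP/negPn/negP => bad_q.
  have qB : q \in B.
    by rewrite mem_filter bad_q mem_iota add0n (leq_ltn_trans _ lP) // (leq_trans (leq_addr d q)).
  by move: (farB q qB); rewrite negb_and -!ltnNge; lia.
- by rewrite /M; lia.
- exact: hk.
Qed.

Lemma size_B_le : (size B <= NC (P * G))%N.
Proof.
rewrite size_filter; apply: leq_trans (count_coef_neq0_le (P * G) (iota_uniq d (size P))).
have -> : iota d (size P) = map (addn d) (iota 0 (size P)) by rewrite -iotaDl addn0.
by rewrite count_map; apply: eq_leq; apply: eq_count => q /=; rewrite addnC.
Qed.

Lemma NC_mul_Xnsub1_le : (NC (P * ('X^k - 1)) <= (size B).+1 * M.+1)%N.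
Proof.
apply: leq_trans (NC_le_count (leqnn _)) _; set s := iota 0 _.
have s_uniq : uniq s by apply: iota_uniq.
apply: leq_trans (sub_count (fun l => @coef_mul_Xnsub1_cover l) _) _.
apply: leq_trans (_ : _ <= count (fun l => l <= M)%N s
  + count (fun l => has (fun b => b <= l <= b + M)%N B) s)%N _.
  by rewrite -count_predUI leq_addr.
rewrite mulSn leq_add ?count_le_windows //.
by apply: (count_le_window (lo := 0)) => // l; rewrite add0n.
Qed.

End CoefficientCount.

Lemma NC_mul_Xnsub1_bound (C : numClosedFieldType) (S : seq int) (P R : {poly C})
    (x : nat -> int) (u k : nat) :
  (forall j, P`_j = (x j)%:~R) -> (forall j, (j < size P)%N -> x j \in S) ->
  R != 0 -> (size R <= u.+1)%N -> totient_dvd u k ->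
  (NC (P * ('X^k - 1)) <= (NC (P * R)).+1 * (size S ^ u + k + u).+1)%N.
Proof.
move=> Px xS R0 size_R hk.
have [->|P0] := eqVneq P 0; first by rewrite mul0r /NC polyseq0.
have S_gt0 : (0 < size S)%N.
  move: (xS 0%N); rewrite size_poly_gt0 P0 lt0n size_eq0 => /(_ isT).
  by apply: contraTneq => ->.
have [t [G [defR G0 size_G]]] := poly_factor_Xn R0.
have G_neq0 : G != 0 by apply: contra_neq G0 => ->; rewrite coef0.
have size_G_pred : size G = (size G).-1.+1 by rewrite prednK // size_poly_gt0.
have du : ((size G).-1 <= u)%N by rewrite -ltnS -size_G_pred (leq_trans size_G size_R).
rewrite defR mulrA NC_mulXn; apply: leq_trans (NC_mul_Xnsub1_le Px xS size_G_pred G0 _) _.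
  exact: totient_dvdW hk.
by rewrite leq_mul ?ltnS ?size_B_le // !leq_add // leq_pexp2l.
Qed.

Theorem lemma3p9 (C : numClosedFieldType) (S : seq int) (n : nat)
    (a : nat -> int) (u : nat) (Rp : {poly C}) (nu : nat) :
  uniq S ->
  coefs_in S (2 * n) a ->
  (size Rp <= u.+1)%N ->
  Rp != 0 ->
  (NC (poly_of_coefs C (2 * n) a * Rp) <= nu)%N ->
  let k := dlcm (vpar u) in
  (NC (poly_of_coefs C (2 * n) a * ('X^k - 1)) <=
     (nu + 1) * (k + size S ^ u.+1 + 3 * u.+1 + 2))%N.
Proof.
move=> _ coefs_a size_Rp Rp0 NC_nu /=; set k := dlcm (vpar u).
pose x j := if (j < (2 * n).+1)%N then a j else 0%R.
have Px j : (poly_of_coefs C (2 * n) a)`_j = (x j)%:~R.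
  by rewrite coef_poly /x; case: ifP.
have xS j : (j < size (poly_of_coefs C (2 * n) a))%N -> x j \in S.
  move=> /leq_trans/(_ (size_poly _ _)) j_lt; rewrite /x j_lt; apply: coefs_a; lia.
have hk : totient_dvd u k.
  have [->|u_gt0] := posnP u; first by move=> m m0; rewrite leqNgt totient_gt0 m0.
  by apply: (totient_dvdW _ (@dvdn_dlcm_totient (vpar u))); have := @vpar_ge u; lia.
have S_gt0 : (0 < size S)%N.
  by have := coefs_a 0%N (leq0n _); rewrite lt0n size_eq0; apply: contraTneq => ->.
have S_pow : (size S ^ u <= size S ^ u.+1)%N by rewrite leq_pexp2l.
apply: leq_trans (NC_mul_Xnsub1_bound Px xS Rp0 size_Rp hk) _.
by rewrite addn1 leq_mul ?ltnS //; lia.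
Qed.
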